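(* Let $(A,\mu,\alpha,\beta)$ be a BiHom-commutative algebra (with $\mu(a\otimes b)=a\cdot b$). Let $p$ and $r$ be natural numbers and let $D:A\to A$ be a linear map commuting with $\alpha$ and $\beta$ such that $D(a\cdot b)=\beta^r(a)\cdot D(b)+D(a)\cdot\beta^r(b)$ for all $a,b\in A$. Define $a\ast b=\alpha^p(a)\cdot D(b)$. Then $(A,\ast,\alpha^{p+1},\beta^{r+1})$ is a BiHom-Novikov algebra.
   Context: Work over a field. A BiHom-associative algebra is a 4-tuple $(A,\mu,\alpha,\beta)$ with $\alpha,\beta$ commuting linear maps, multiplicative for $\mu$, and $\alpha(x)\cdot(y\cdot z)=(x\cdot y)\cdot\beta(z)$; it is BiHom-commutative if $\beta(a)\cdot\alpha(b)=\beta(b)\cdot\alpha(a)$ for all $a,b$. A BiHom-Novikov algebra is a 4-tuple $(A,\ast,\alpha',\beta')$ with commuting linear maps $\alpha',\beta'$ multiplicative for $\ast$ such that for all $x,y,z$: $(\beta'(x)\ast\alpha'(y))\ast\beta'(z)-\alpha'\beta'(x)\ast(\alpha'(y)\ast z)=(\beta'(y)\ast\alpha'(x))\ast\beta'(z)-\alpha'\beta'(y)\ast(\alpha'(x)\ast z)$ and $(x\ast\beta'(y))\ast\alpha'\beta'(z)=(x\ast\beta'(z))\ast\alpha'\beta'(y)$. *)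

From HB Require Import structures.
From mathcomp Require Import all_boot all_algebra.
Set Implicit Arguments. Unset Strict Implicit. Unset Printing Implicit Defensive.
Import GRing.Theory.
Local Open Scope ring_scope.

Section BiHom.
Variables (K : fieldType) (A : lmodType K).

Definition lin_map (f : A -> A) : Prop :=
  forall (k : K) (x y : A), f (k *: x + y) = k *: f x + f y.

Definition bilin (m : A -> A -> A) : Prop :=
  (forall (k : K) (x y z : A), m (k *: x + y) z = k *: m x z + m y z) /\
  (forall (k : K) (x y z : A), m x (k *: y + z) = k *: m x y + m x z).

Definition bihom_structure (m : A -> A -> A) (al be : A -> A) : Prop :=
  bilin m /\ lin_map al /\ lin_map be /\
  (forall x, al (be x) = be (al x)) /\
  (forall x y, al (m x y) = m (al x) (al y)) /\
  (forall x y, be (m x y) = m (be x) (be y)).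

Definition BiHomAssociative (m : A -> A -> A) (al be : A -> A) : Prop :=
  bihom_structure m al be /\
  forall x y z, m (al x) (m y z) = m (m x y) (be z).

Definition BiHomCommutativeAlg (m : A -> A -> A) (al be : A -> A) : Prop :=
  BiHomAssociative m al be /\
  forall a b, m (be a) (al b) = m (be b) (al a).

Definition BiHomNovikov (m : A -> A -> A) (al be : A -> A) : Prop :=
  bihom_structure m al be /\
  (forall x y z,
     m (m (be x) (al y)) (be z) - m (al (be x)) (m (al y) z) =
     m (m (be y) (al x)) (be z) - m (al (be y)) (m (al x) z)) /\
  (forall x y z, m (m x (be y)) (al (be z)) = m (m x (be z)) (al (be y))).

End BiHom.

From HB Require Import structures.
From mathcomp Require Import all_boot all_algebra.
Set Implicit Arguments.
Unset Strict Implicit.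
Unset Printing Implicit Defensive.
Import GRing.Theory.
Local Open Scope ring_scope.

(* For (a, b) |-> α^p(a) D(b) the proof works for any multiplicative linear
   maps P, R in place of α^p, β^r, as long as α, β, D, P, R pairwise commute.
   Pushing all maps inside the products, the second Novikov identity becomes
   the exchange rule (x β(u)) αβ(v) = (x β(v)) αβ(u), which follows from
   BiHom-associativity and BiHom-commutativity.  In the first identity the
   twisted Leibniz rule splits α'β'(x) * (α'(y) * z) into two terms; by
   BiHom-associativity one cancels (β'(x) * α'(y)) * β'(z), and the other,
   αβ(u) (α(v) w), is symmetric in u, v by the companion exchange rule. *)

Section Iterates.
Variables (T : Type) (f g : T -> T).

Lemma iter_commute : (forall x, f (g x) = g (f x)) ->
  forall n x, f (iter n g x) = iter n g (f x).
Proof. by move=> fg; elim=> [|n IHn] x //=; rewrite fg IHn. Qed.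

Lemma iter_morph (op : T -> T -> T) : {morph f : x y / op x y} ->
  forall n, {morph iter n f : x y / op x y}.
Proof. by move=> fM; elim=> [|n IHn] x y //=; rewrite IHn fM. Qed.

End Iterates.

Lemma lin_map_iter (K : fieldType) (A : lmodType K) (f : A -> A) :
  lin_map f -> forall n, lin_map (iter n f).
Proof. by move=> f_lin; elim=> [|n IHn] k x y //=; rewrite IHn f_lin. Qed.

Section TwistedNovikov.
Variables (K : fieldType) (A : lmodType K) (mu : A -> A -> A).
Variables (alpha beta D P R : A -> A).

Hypothesis mu_bilin : bilin mu.
Hypotheses (alpha_lin : lin_map alpha) (beta_lin : lin_map beta).
Hypothesis alpha_beta : forall x, alpha (beta x) = beta (alpha x).
Hypothesis alpha_mul : {morph alpha : x y / mu x y}.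
Hypothesis beta_mul : {morph beta : x y / mu x y}.
Hypothesis mu_assoc : forall x y z, mu (alpha x) (mu y z) = mu (mu x y) (beta z).
Hypothesis mu_comm : forall a b, mu (beta a) (alpha b) = mu (beta b) (alpha a).

Hypotheses (D_lin : lin_map D) (P_lin : lin_map P) (R_lin : lin_map R).
Hypotheses (P_mul : {morph P : x y / mu x y}) (R_mul : {morph R : x y / mu x y}).
Hypotheses (P_alpha : forall x, P (alpha x) = alpha (P x))
           (P_beta : forall x, P (beta x) = beta (P x)).
Hypotheses (R_alpha : forall x, R (alpha x) = alpha (R x))
           (R_P : forall x, R (P x) = P (R x)).
Hypotheses (D_alpha : forall x, D (alpha x) = alpha (D x))
           (D_beta : forall x, D (beta x) = beta (D x))
           (D_P : forall x, D (P x) = P (D x))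
           (D_R : forall x, D (R x) = R (D x)).
Hypothesis D_mul : forall a b, D (mu a b) = mu (R a) (D b) + mu (D a) (R b).

Lemma mu_addr x y z : mu x (y + z) = mu x y + mu x z.
Proof. by have := mu_bilin.2 1 x y z; rewrite !scale1r. Qed.

Lemma mu_exchange_left u v w :
  mu (alpha (beta u)) (mu (alpha v) w) = mu (alpha (beta v)) (mu (alpha u) w).
Proof. by rewrite !mu_assoc mu_comm. Qed.

Lemma mu_exchange_right x u v :
  mu (mu x (beta u)) (alpha (beta v)) = mu (mu x (beta v)) (alpha (beta u)).
Proof. by rewrite !alpha_beta -!mu_assoc mu_comm. Qed.

Let beta_alpha x : beta (alpha x) = alpha (beta x). Proof. by rewrite alpha_beta. Qed.

(* Rewriting with these rules pushes α, β, P, R inside the products and sorts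
   the remaining compositions as α ∘ β ∘ P ∘ R ∘ D, outermost first. *)
Let normalize := (alpha_mul, beta_mul, P_mul, R_mul, beta_alpha, P_alpha,
  P_beta, R_alpha, R_P, D_alpha, D_beta, D_P, D_R).

Local Notation star a b := (mu (P a) (D b)).
Local Notation alpha' x := (alpha (P x)).
Local Notation beta' x := (beta (R x)).

Lemma twisted_bihom_structure :
  bihom_structure (fun a b => star a b) (fun x => alpha' x) (fun x => beta' x).
Proof.
split; [split|split; [|split; [|split; [|split]]]].
- by move=> k x y z; rewrite P_lin mu_bilin.1.
- by move=> k x y z; rewrite D_lin mu_bilin.2.
- by move=> k x y; rewrite P_lin alpha_lin.
- by move=> k x y; rewrite R_lin beta_lin.
- by move=> x; rewrite !normalize.
- by move=> x y; rewrite !normalize.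
- by move=> x y; rewrite !normalize.
Qed.

Lemma twisted_novikov_defect x y z :
  star (star (beta' x) (alpha' y)) (beta' z)
    - star (alpha' (beta' x)) (star (alpha' y) z)
  = - mu (alpha (beta (P (P (R x))))) (mu (alpha (P (P (R y)))) (D (D z))).
Proof.
rewrite D_mul mu_addr !normalize.
rewrite (mu_assoc _ (alpha (P (P (D y))))).
by rewrite (addrC (mu _ (mu _ (D (D z))))) opprD addrA subrr add0r.
Qed.

Theorem twisted_BiHomNovikov :
  BiHomNovikov (fun a b => star a b) (fun x => alpha' x) (fun x => beta' x).
Proof.
split; [exact: twisted_bihom_structure | split] => x y z.
- by rewrite !twisted_novikov_defect mu_exchange_left.
- by rewrite !normalize mu_exchange_right.
Qed.

End TwistedNovikov.

Theorem corollary2p8 (K : fieldType) (A : lmodType K)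
  (mu : A -> A -> A) (alpha beta D : A -> A) (p r : nat) :
  BiHomCommutativeAlg mu alpha beta ->
  lin_map D ->
  (forall x, D (alpha x) = alpha (D x)) ->
  (forall x, D (beta x) = beta (D x)) ->
  (forall a b, D (mu a b) = mu (iter r beta a) (D b) + mu (D a) (iter r beta b)) ->
  BiHomNovikov (fun a b => mu (iter p alpha a) (D b))
               (iter p.+1 alpha) (iter r.+1 beta).
Proof.
move=> [[[mu_bilin [alpha_lin [beta_lin [alpha_beta [alpha_mul beta_mul]]]]]
  mu_assoc] mu_comm] D_lin D_alpha D_beta D_mul.
have beta_alpha x : beta (alpha x) = alpha (beta x) by rewrite alpha_beta.
have alphap_beta x : iter p alpha (beta x) = beta (iter p alpha x).
  by rewrite (iter_commute beta_alpha).
apply: (twisted_BiHomNovikov (P := iter p alpha) (R := iter r beta)) => //.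
- exact: lin_map_iter.
- exact: lin_map_iter.
- exact: iter_morph.
- exact: iter_morph.
- by move=> x; rewrite -iterSr.
- by move=> x; rewrite (iter_commute alpha_beta).
- by move=> x; rewrite (iter_commute alphap_beta).
- exact: iter_commute.
- exact: iter_commute.
Qed.
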